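(* Let $F(x)=\frac{1-x-\sqrt{1-2x-3x^2}}{2x^2}$ be the generating function of the Motzkin numbers $a_n=\sum_{i\ge0}\frac{1}{i+1}\binom{n}{2i}\binom{2i}{i}$. Let $k$ be a positive integer and $m\in\mathbb{N}$. Then $D_{2k,1-2k-m}(N)=0$ for $N=1,\dots,m+2k-1$, and $D_{2k,1-2k-m}(n+m+2k)=(-1)^{\binom{m+2k}{2}}D_{2k,1-2k+m}(n)$ for all $n\in\mathbb{N}$; $D_{2k-1,2-2k-m}(N)=0$ for $N=1,\dots,m+2k-2$, and $D_{2k-1,2-2k-m}(n+m+2k-1)=(-1)^{\binom{m+2k-1}{2}}D_{2k-1,2-2k+m}(n)$ for all $n\in\mathbb{N}$.
   Context: For a power series $F(x)=\sum_{n\ge0}a_nx^n$ and $K\ge1$, write $F(x)^K=\sum_{n\ge0}a_{K,n}x^n$ and set $a_{K,n}=0$ for $n<0$. For $M\in\mathbb{Z}$ and $K,N\in\mathbb{N}$ with $K\ge1$, define the shifted Hankel determinant $D_{K,M}(N)=\det(a_{K,i+j+M})_{i,j=0}^{N-1}$, with $D_{K,M}(0)=1$. $\mathbb{N}=\{0,1,2,\dots\}$. *)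

From mathcomp Require Import all_boot all_order all_algebra.
Set Implicit Arguments. Unset Strict Implicit. Unset Printing Implicit Defensive.
Import GRing.Theory Num.Theory.
Local Open Scope ring_scope.

(* Motzkin numbers a_n = sum_{i>=0} 1/(i+1) C(n,2i) C(2i,i)  (terms vanish for 2i>n) *)
Definition motzkin (n : nat) : rat :=
  \sum_(i < n.+1) ('C(n, i.*2) * 'C(i.*2, i))%:R / (i.+1)%:R.

(* F(x) = sum_n a_n x^n. The coefficient of x^n in F^K only depends on a_0..a_n,
   so it equals the coefficient of x^n in (truncation of F to degree n)^K. *)
Definition motzkin_trunc (n : nat) : {poly rat} := \poly_(i < n.+1) motzkin i.

Definition aK (K : nat) (n : int) : rat :=
  match n with
  | Posz p => ((motzkin_trunc p) ^+ K)`_p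
  | Negz _ => 0
  end.

Definition hankelD (K : nat) (M : int) (N : nat) : rat :=
  \det (\matrix_(i < N, j < N) aK K ((i + j)%:Z + M)).

(* The Motzkin series satisfies F (1 - x - x^2 F) = 1; this follows from the Catalan equation
   x C^2 - C + 1 = 0 through F(x) = C(x^2 / (1 - x)^2) / (1 - x). Put U := 1 - x - x^2 F = 1 / F and
   W := x^2 F. Multiplying the Hankel matrix (a_{K,i+j-L}) on the right by the unitriangular Toeplitz
   matrix of U^K = 1 / F^K makes it block lower triangular: an anti-identity block of size L + 1 and,
   below it, the unitriangular Toeplitz matrix of F^K times the Hankel matrix of the coefficients of
   U^K of index at least L + 2. Since U + W = 1 - x and U W = x^2, U^K + W^K is a polynomial of
   degree K, so these coefficients are those of -W^K = -x^(2K) F^K, i.e. shifted values -a_{K,n}.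
   The vanishing determinants are those whose first row lies in the negative indices. *)

From mathcomp Require Import all_boot all_order all_algebra.
From mathcomp Require Import ring zify lra.
Set Implicit Arguments. Unset Strict Implicit. Unset Printing Implicit Defensive.
Import GRing.Theory Num.Theory.
Local Open Scope ring_scope.

Lemma sum_ord_trunc (R : nmodType) (F : nat -> R) a b :
  (a <= b)%N -> (forall t, (a <= t)%N -> F t = 0) -> \sum_(t < b) F t = \sum_(t < a) F t.
Proof.
move=> hab hF; rewrite (big_ord_widen b F hab) [RHS]big_mkcond /=.
by apply: eq_bigr => i _; case: ltnP => // /hF.
Qed.

Section TruncatedEquality.
Variable R : comNzRingType.
Implicit Types (p q r Y : {poly R}) (N : nat).

Definition eqtrunc N p q := forall i, (i < N)%N -> p`_i = q`_i.

Lemma eqtrunc_sym N p q : eqtrunc N p q -> eqtrunc N q p.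
Proof. by move=> h i /h ->. Qed.

Lemma eqtrunc_trans N p q r : eqtrunc N p q -> eqtrunc N q r -> eqtrunc N p r.
Proof. by move=> hpq hqr i hi; rewrite hpq // hqr. Qed.

Lemma eqtruncD N p q p' q' :
  eqtrunc N p q -> eqtrunc N p' q' -> eqtrunc N (p + p') (q + q').
Proof. by move=> h h' i hi; rewrite !coefD h // h'. Qed.

Lemma eqtruncB N p q p' q' :
  eqtrunc N p q -> eqtrunc N p' q' -> eqtrunc N (p - p') (q - q').
Proof. by move=> h h' i hi; rewrite !coefB h // h'. Qed.

Lemma eqtruncM N p q p' q' :
  eqtrunc N p q -> eqtrunc N p' q' -> eqtrunc N (p * p') (q * q').
Proof.
move=> h h' i hi; rewrite !coefM; apply: eq_bigr => j _.
rewrite h ?h' //; [exact: leq_ltn_trans (leq_subr _ _) hi | exact: leq_trans hi].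
Qed.

Lemma eqtruncX N p q k : eqtrunc N p q -> eqtrunc N (p ^+ k) (q ^+ k).
Proof. by move=> h; elim: k => [|k ih] //; rewrite !exprS; apply: eqtruncM. Qed.

Lemma eqtrunc_addXnM N p r : eqtrunc N (p + 'X^N * r) p.
Proof. by move=> i hi; rewrite coefD coefXnM hi addr0. Qed.

Lemma eqtrunc_drop_polyE N p q : eqtrunc N p q -> p = q + 'X^N * drop_poly N (p - q).
Proof.
move=> h; have take0 : take_poly N (p - q) = 0.
  by apply/polyP => i; rewrite coef_take_poly coef0 coefB; case: ifP => // /h ->; rewrite subrr.
have := poly_take_drop N (p - q); rewrite take0 add0r mulrC => ->.
by rewrite addrC subrK.
Qed.

Lemma eqtrunc_comp N p q Y :
  Y`_0 = 0 -> eqtrunc N p q -> eqtrunc N (p \Po Y) (q \Po Y).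
Proof.
move=> Y0 /eqtrunc_drop_polyE ->.
have /eqtrunc_drop_polyE -> : eqtrunc 1 Y 0 by case=> // _; rewrite Y0 coef0.
rewrite comp_polyD comp_polyM rmorphXn /= comp_polyX add0r exprMn -mulrA.
exact: eqtrunc_addXnM.
Qed.

Definition geom_poly N : {poly R} := \sum_(i < N) 'X^i.

Lemma geom_polyK N : eqtrunc N ((1 - 'X) * geom_poly N) 1.
Proof.
have -> : (1 - 'X) * geom_poly N = 1 + 'X^N * (- 1).
  elim: N => [|N ih]; first by rewrite /geom_poly big_ord0 mulr0 expr0; ring.
  rewrite /geom_poly big_ord_recr /= mulrDr -/(geom_poly N) ih exprS; ring.
exact: eqtrunc_addXnM.
Qed.

Lemma coef_geom_polyX N k m : (m < N)%N -> (geom_poly N ^+ k.+1)`_m = ('C(m + k, k))%:R.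
Proof.
have geom1 j : (j < N)%N -> (geom_poly N)`_j = 1.
  move=> hj; rewrite /geom_poly coef_sum (bigD1 (Ordinal hj)) //= coefXn eqxx big1 ?addr0 //.
  by move=> i /negbTE; rewrite coefXn -val_eqE /= eq_sym => ->.
elim: k m => [|k ih] m hm; first by rewrite expr1 geom1 // bin0.
have rec : eqtrunc N ((1 - 'X) * geom_poly N ^+ k.+2) (geom_poly N ^+ k.+1).
  by rewrite exprS mulrA -[X in eqtrunc _ _ X]mul1r; apply: eqtruncM => //; apply: geom_polyK.
elim: m hm => [|m ihm] hm; have := rec _ hm; rewrite mulrBl mul1r coefB coefXM /=.
  by rewrite subr0 => ->; rewrite ih // !add0n !binn.
move/eqP; rewrite subr_eq => /eqP ->; rewrite ihm ?(ltnW hm) // ih // -natrD.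
by rewrite !(addSn, addnS) (binS (m + k).+1) (binS (m + k) k); congr (_%:R); lia.
Qed.

Lemma eqtrunc_power_sum N (U W : {poly R}) :
  U + W = 1 - 'X -> eqtrunc N (U * W) 'X^2 ->
  forall K, exists2 s : {poly R}, (size s <= K.+1)%N & eqtrunc N (U ^+ K + W ^+ K) s.
Proof.
move=> UW_sum UW_prod K.
suff [] : (exists2 s : {poly R}, (size s <= K.+1)%N & eqtrunc N (U ^+ K + W ^+ K) s) /\
          (exists2 s : {poly R}, (size s <= K.+2)%N & eqtrunc N (U ^+ K.+1 + W ^+ K.+1) s) by [].
have size_1subX : size (1 - 'X : {poly R}) = 2%N by rewrite -opprB size_polyN size_XsubC.
elim: K => [|K [[s0 hs0 e0] [s1 hs1 e1]]].
  split; first by exists (2%:R)%:P; [exact: size_polyC_leq1 | rewrite !expr0 polyC_natr].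
  by exists (1 - 'X); [rewrite size_1subX | rewrite !expr1 UW_sum].
split; first by exists s1.
exists ((1 - 'X) * s1 - 'X^2 * s0).
  rewrite (leq_trans (size_polyD _ _)) // geq_max size_polyN.
  have := size_polyMleq (1 - 'X) s1; have := size_polyMleq 'X^2 s0.
  rewrite size_1subX size_polyXn => h1 h2.
  by apply/andP; split; [apply: leq_trans h2 _ | apply: leq_trans h1 _].
have -> : U ^+ K.+2 + W ^+ K.+2 = (U + W) * (U ^+ K.+1 + W ^+ K.+1) - (U * W) * (U ^+ K + W ^+ K).
  by rewrite !exprS; ring.
by rewrite UW_sum; apply: eqtruncB; apply: eqtruncM.
Qed.
End TruncatedEquality.

Arguments geom_poly {R}.

Definition catalan (i : nat) : rat := 'C(i.*2, i)%:R / i.+1%:R.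

Lemma catalan_rec i : i.+2%:R * catalan i.+1 = (4 * i + 2)%:R * catalan i.
Proof.
have bin_rec : (i.+1 * 'C(i.*2.+2, i.+1) = (4 * i + 2) * 'C(i.*2, i))%N.
  have h1 := mul_bin_diag i.*2.+2 i; have h2 := mul_bin_diag i.*2.+1 i.
  have sym : 'C(i.*2.+1, i.+1) = 'C(i.*2.+1, i) by rewrite -bin_sub ?subSS -?addnn ?addnK; lia.
  rewrite /= sym in h1 h2; nia.
rewrite /catalan -[i.+1.*2]/i.*2.+2 mulrC divfK ?pnatr_eq0 //.
apply: (mulfI (_ : i.+1%:R != 0)); first by rewrite pnatr_eq0.
by rewrite -natrM bin_rec natrM; field; rewrite addrC natr1 pnatr_eq0.
Qed.

Definition catalan_poly N : {poly rat} := \poly_(i < N) catalan i.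

Lemma coefXMderiv (R : nzRingType) (p : {poly R}) n : ('X * p^`())`_n = p`_n *+ n.
Proof. by rewrite coefXM coef_deriv; case: n. Qed.

(* (n + 1) c_n = (4 n - 2) c_(n-1) is the coefficientwise form of this equation *)
Lemma catalan_poly_ode N (C := catalan_poly N) :
  eqtrunc N ('X * C^`() - ('X * ('X * C^`())) *+ 4) (1 - C + ('X * C) *+ 2).
Proof.
have c0 : catalan 0 = 1 by rewrite /catalan bin0 divr1.
have c1 : catalan 1 = 1 by rewrite /catalan bin1 divff.
move=> n hn; rewrite coefB coefMn coefXMderiv coefXM coefXMderiv coefD coefB coefMn coefXM coef1.
rewrite /C /catalan_poly; case: n hn => [|[|j]] hn; rewrite !coef_poly ?hn ?(ltnW hn) /=.
- by rewrite c0 mulr0n mul0rn; lra.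
- by rewrite c0 c1 mulr0n mul0rn mulr2n; lra.
apply/eqP; rewrite -subr_eq0; apply/eqP.
transitivity (j.+3%:R * catalan j.+2 - (4 * j.+1 + 2)%:R * catalan j.+1); first ring.
by rewrite catalan_rec subrr.
Qed.

(* The quadratic Q := x C^2 - C + 1 satisfies (1 - 4x) x Q' + Q = 0 modulo the ODE, and Q(0) = 0. *)
Lemma catalan_poly_quad N (C := catalan_poly N) : eqtrunc N ('X * (C * C) - C + 1) 0.
Proof.
set Q := 'X * (C * C) - C + 1.
have Q_ode : eqtrunc N ('X * Q^`() - ('X * ('X * Q^`())) *+ 4 + Q) 0.
  have -> : 'X * Q^`() - ('X * ('X * Q^`())) *+ 4 + Q = ('X - ('X * 'X) *+ 4) * (C * C)
      + (('X * C) *+ 2 - 1) * ('X * C^`() - ('X * ('X * C^`())) *+ 4) + Q.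
    by rewrite /Q !derivE; ring.
  apply: (@eqtrunc_trans _ _ _ (('X - ('X * 'X) *+ 4) * (C * C)
      + (('X * C) *+ 2 - 1) * (1 - C + ('X * C) *+ 2) + Q)).
    by apply: eqtruncD => //; apply: eqtruncD => //; apply: eqtruncM => //; apply: catalan_poly_ode.
  have -> : ('X - ('X * 'X) *+ 4) * (C * C) + (('X * C) *+ 2 - 1) * (1 - C + ('X * C) *+ 2) + Q = 0.
    by rewrite /Q; ring.
  by [].
elim=> [|n ih] hn.
  rewrite /Q coefD coefB coefXM coef1 /C /catalan_poly coef_poly hn coef0 /=.
  by rewrite /catalan bin0 divr1; ring.
have := Q_ode _ hn; rewrite coef0 coefD coefB coefMn coefXMderiv coefXM coefXMderiv /=.
rewrite ih ?(ltnW hn) // coef0 !mul0rn subr0 -mulrSr => /eqP.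
by rewrite mulrn_eq0 /= => /eqP.
Qed.

Definition motzkin_poly N : {poly rat} := \poly_(i < N) motzkin i.

Lemma motzkinE n : motzkin n = \sum_(i < n.+1) 'C(n, i.*2)%:R * catalan i.
Proof. by apply: eq_bigr => i _; rewrite /catalan natrM mulrA. Qed.

(* a_n = sum_i C(n, 2i) c_i says F(x) = C(x^2 / (1 - x)^2) / (1 - x). *)
Lemma motzkin_poly_catalan N (G := geom_poly N) :
  eqtrunc N (G * (catalan_poly N \Po ('X^2 * G ^+ 2))) (motzkin_poly N).
Proof.
set Y := 'X^2 * G ^+ 2.
have comp_sum : catalan_poly N \Po Y = \sum_(i < N) catalan i *: Y ^+ i.
  rewrite /catalan_poly poly_def raddf_sum; apply: eq_bigr => i _.
  by rewrite /= comp_polyZ comp_Xn_poly.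
move=> n hn; rewrite comp_sum mulr_sumr coef_sum /motzkin_poly coef_poly hn motzkinE.
have coefGY i : (G * Y ^+ i)`_n = 'C(n, i.*2)%:R.
  rewrite /Y exprMn -!exprM mulrCA -exprS coefXnM -muln2 mulnC.
  case: ltnP => [/bin_small -> //| hi].
  by rewrite coef_geom_polyX ?subnK // (leq_ltn_trans (leq_subr _ _) hn).
transitivity (\sum_(i < N) 'C(n, i.*2)%:R * catalan i).
  by apply: eq_bigr => i _; rewrite -scalerAr coefZ coefGY mulrC.
rewrite (@sum_ord_trunc _ (fun i => 'C(n, i.*2)%:R * catalan i) n.+1 N) //.
by move=> i hi; rewrite bin_small ?mul0r // -addnn; lia.
Qed.

Lemma motzkin_poly_quad N (F := motzkin_poly N) : eqtrunc N (F * (1 - 'X - 'X^2 * F)) 1.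
Proof.
pose G : {poly rat} := geom_poly N; pose Y := 'X^2 * G ^+ 2; pose C' := catalan_poly N \Po Y.
have FE := eqtrunc_sym (@motzkin_poly_catalan N).
apply: (@eqtrunc_trans _ _ _ (G * C' * (1 - 'X - 'X^2 * (G * C')))).
  by apply: eqtruncM => //; apply: eqtruncB => //; apply: eqtruncM.
have -> : G * C' * (1 - 'X - 'X^2 * (G * C')) = C' * ((1 - 'X) * G) - Y * (C' * C').
  by rewrite /Y; ring.
apply: (@eqtrunc_trans _ _ _ (C' * 1 - Y * (C' * C'))).
  by apply: eqtruncB => //; apply: eqtruncM => //; apply: geom_polyK.
have -> : C' * 1 - Y * (C' * C') =
          1 - (('X * (catalan_poly N * catalan_poly N) - catalan_poly N + 1) \Po Y).
  by rewrite comp_polyD comp_polyB comp_polyM comp_polyM comp_polyX comp_polyC; ring.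
rewrite -[X in eqtrunc _ _ X]subr0; apply: eqtruncB => //.
rewrite -(comp_poly0 Y); apply: eqtrunc_comp; last exact: catalan_poly_quad.
by rewrite /Y coefXnM.
Qed.

Lemma aK_motzkin_poly K p N : (p < N)%N -> aK K p = (motzkin_poly N ^+ K)`_p.
Proof.
move=> hp; apply: (@eqtruncX _ p.+1) => // i hi.
by rewrite /motzkin_poly !coef_poly hi (leq_trans hi hp).
Qed.

Lemma aK0 K : aK K 0 = 1.
Proof.
rewrite (@aK_motzkin_poly K 0 1) //.
elim: K => [|K ih]; first by rewrite coef1.
by rewrite exprS coef0M ih coef_poly /motzkin big_ord1 bin0 divr1 mulr1.
Qed.

Section HankelDeterminant.
Variable R : comNzRingType.

Definition hankel_mx (g : int -> R) (M : int) n : 'M[R]_n :=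
  \matrix_(i < n, j < n) g ((i + j)%:Z + M).

Definition toeplitz_mx (g : int -> R) n : 'M[R]_n := \matrix_(i < n, j < n) g (i%:Z - j%:Z).

Definition upper_toeplitz_mx (h : nat -> R) n : 'M[R]_n :=
  \matrix_(i < n, j < n) if (i <= j)%N then h (j - i)%N else 0.

Definition antidiag_mx n : 'M[R]_n := \matrix_(i < n, j < n) ((i + j).+1 == n)%:R.

Lemma det_antidiag_mx n : \det (antidiag_mx n) = (-1) ^+ 'C(n, 2).
Proof.
elim: n => [|n ih]; first by rewrite det_mx00.
rewrite (expand_det_row _ ord0) (bigD1 ord_max) //= big1 ?addr0; last first.
  move=> j /negbTE; rewrite mxE /= add0n eqSS -val_eqE /= => ->; exact: mul0r.
rewrite mxE /= add0n eqxx mul1r /cofactor /= add0n.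
have -> : row' ord0 (col' ord_max (antidiag_mx n.+1)) = antidiag_mx n.
  by apply/matrixP => i j; rewrite !mxE /= /bump /= leqNgt ltn_ord /= !add1n addSn.
by rewrite ih -exprD binS bin1 addnC.
Qed.

Lemma det_upper_toeplitz_mx h n : \det (upper_toeplitz_mx h n) = h 0%N ^+ n.
Proof.
rewrite -det_tr det_trig; last by apply/is_trig_mxP => i j ij; rewrite !mxE leqNgt ij.
by rewrite (eq_bigr (fun=> h 0%N)) ?prodr_const ?card_ord // => i _; rewrite !mxE leqnn subnn.
Qed.

Section VanishingAtNegatives.
Variable g : int -> R.
Hypothesis g_neg : forall k, g (Negz k) = 0.

Lemma g_lt0 x : x < 0 -> g x = 0.
Proof. by case: x. Qed.

Lemma det_toeplitz_mx n : \det (toeplitz_mx g n) = g 0 ^+ n.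
Proof.
rewrite det_trig; last by apply/is_trig_mxP => i j ij; rewrite !mxE g_lt0 //; lia.
by rewrite (eq_bigr (fun=> g 0)) ?prodr_const ?card_ord // => i _; rewrite !mxE subrr.
Qed.

Lemma det_hankel_mx_neg_shift L N : (0 < N <= L)%N -> \det (hankel_mx g (- L%:Z) N) = 0.
Proof.
case: N => [//|N] /andP[_ NL]; rewrite (expand_det_row _ ord0) big1 // => j _.
by rewrite mxE g_lt0 ?mul0r //= add0n; have := ltn_ord j; lia.
Qed.

Variables (h : nat -> R) (B : nat).
Hypothesis gh_inv : forall s, (s < B)%N ->
  \sum_(t < s.+1) g (s%:Z - t%:Z) * h t = (s == 0)%:R.

Lemma conv_inv_shift (S : int) l : S <= l%:Z -> (l < B)%N ->
  \sum_(t < l.+1) g (S - t%:Z) * h t = (S == 0)%:R.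
Proof.
case: S => [s|k] sl lB; last by rewrite big1 // => t _; rewrite g_lt0 ?mul0r //; lia.
rewrite (@sum_ord_trunc _ (fun t => g (s%:Z - t%:Z) * h t) s.+1) ?gh_inv //; try lia.
by move=> t st; rewrite g_lt0 ?mul0r //; lia.
Qed.

Lemma conv_inv_tail l p n : (p < n)%N -> (l + p.+1 < B)%N ->
  \sum_(t < l.+1) g ((l + p.+1)%:Z - t%:Z) * h t =
  - \sum_(r < n) g (p%:Z - r%:Z) * h (l.+1 + r).
Proof.
move=> pn lpB; have := gh_inv lpB.
rewrite -[(l + p.+1).+1]/(l.+1 + p.+1)%N big_split_ord /= addnS.
move/eqP; rewrite addr_eq0 => /eqP ->; congr (- _).
rewrite (@sum_ord_trunc _ (fun r => g (p%:Z - r%:Z) * h (l.+1 + r)) p.+1) //; last first.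
  by move=> r pr; rewrite g_lt0 ?mul0r //; lia.
by apply: eq_bigr => r _; congr (g _ * _); lia.
Qed.
End VanishingAtNegatives.

Lemma hankel_mulmx_upper_toeplitz g h L m (i j : 'I_m) :
  (hankel_mx g (- L%:Z) m *m upper_toeplitz_mx h m) i j =
  \sum_(t < j.+1) g ((i + j)%:Z - L%:Z - t%:Z) * h t.
Proof.
pose F k := g ((i + k)%:Z + - L%:Z) * (if (k <= j)%N then h (j - k)%N else 0).
rewrite mxE (eq_bigr (fun k : 'I_m => F k)) => [|k _]; last by rewrite !mxE.
rewrite (@sum_ord_trunc _ F j.+1) // => [|k jk]; last by rewrite /F leqNgt jk mulr0.
rewrite (reindex_inj rev_ord_inj); apply: eq_bigr => t _.
have tj : (t <= j)%N by rewrite -ltnS.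
rewrite /F /= subSS leq_subr subKn //; congr (g _ * _); lia.
Qed.

Section HankelShift.
Variables (g : int -> R) (h : nat -> R) (L n : nat) (M : int).
Hypothesis g_neg : forall k, g (Negz k) = 0.
Hypothesis g0 : g 0 = 1.
Hypothesis gh_inv : forall s, (s < (L.+1 + n).*2)%N ->
  \sum_(t < s.+1) g (s%:Z - t%:Z) * h t = (s == 0)%:R.
Hypothesis h_tail : forall r, (r < n.*2)%N -> h (L.+2 + r) = - g (r%:Z + M).

Let B := hankel_mx g (- L%:Z) (L.+1 + n) *m upper_toeplitz_mx h (L.+1 + n).

Lemma ursubmx_hankel_shift : ursubmx B = 0.
Proof.
apply/matrixP => i j; rewrite /B [LHS]mxE [LHS]mxE hankel_mulmx_upper_toeplitz /=.
have := ltn_ord i; have := ltn_ord j => jn iL.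
rewrite (conv_inv_shift g_neg gh_inv) ?mxE; try lia.
by case: eqP => //; lia.
Qed.

Lemma ulsubmx_hankel_shift : ulsubmx B = antidiag_mx L.+1.
Proof.
apply/matrixP => i j; rewrite /B [LHS]mxE [LHS]mxE hankel_mulmx_upper_toeplitz /=.
have := ltn_ord i; have := ltn_ord j => jL iL.
rewrite (conv_inv_shift g_neg gh_inv) ?mxE; try lia.
by congr (_%:R); apply/eqP/eqP; lia.
Qed.

Lemma drsubmx_hankel_shift : drsubmx B = toeplitz_mx g n *m hankel_mx g M n.
Proof.
apply/matrixP => p q; rewrite /B [LHS]mxE [LHS]mxE hankel_mulmx_upper_toeplitz /=.
have := ltn_ord p; have := ltn_ord q => qn pn.
rewrite (_ : _ - L%:Z = (L.+1 + q + p.+1)%N%:Z); last by lia.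
rewrite (conv_inv_tail g_neg gh_inv pn); last by lia.
rewrite mxE -sumrN; apply: eq_bigr => r _; rewrite !mxE -mulrN; congr (_ * _).
rewrite (_ : (L.+1 + q).+1 + r = L.+2 + (r + q))%N; last lia.
by rewrite h_tail ?opprK //; have := ltn_ord r; lia.
Qed.

Lemma det_hankel_shift :
  \det (hankel_mx g (- L%:Z) (L.+1 + n)) = (-1) ^+ 'C(L.+1, 2) * \det (hankel_mx g M n).
Proof.
have h0 : h 0%N = 1 by have := gh_inv (s := 0); rewrite big_ord1 g0 mul1r; apply.
have -> : \det (hankel_mx g (- L%:Z) (L.+1 + n)) = \det B.
  by rewrite det_mulmx det_upper_toeplitz_mx h0 expr1n mulr1.
rewrite -[B]submxK ursubmx_hankel_shift det_lblock ulsubmx_hankel_shift drsubmx_hankel_shift.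
by rewrite det_antidiag_mx det_mulmx det_toeplitz_mx // g0 expr1n mul1r.
Qed.

End HankelShift.
End HankelDeterminant.

Lemma hankelD_neg_shift_eq0 K L N : (0 < N <= L)%N -> hankelD K (- L%:Z) N = 0.
Proof. exact: det_hankel_mx_neg_shift. Qed.

Lemma hankelD_shift K L m n : (0 < K)%N -> L.+1 = (K + m)%N ->
  hankelD K (- L%:Z) (n + L.+1) = (-1) ^+ 'C(L.+1, 2) * hankelD K (m%:Z + 1 - K%:Z) n.
Proof.
move=> K_gt0 LKm; rewrite addnC; pose N := ((L.+1 + n).*2 + L.+3)%N.
pose F := motzkin_poly N; pose U := 1 - 'X - 'X^2 * F; pose W := 'X^2 * F.
have FU : eqtrunc N (F * U) 1 := @motzkin_poly_quad N.
have UW : eqtrunc N (U * W) 'X^2.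
  rewrite (_ : U * W = F * U * 'X^2); last by rewrite /W; ring.
  by rewrite -[X in eqtrunc _ _ X]mul1r; apply: eqtruncM.
have [s s_size UW_sum] := eqtrunc_power_sum (subrK _ _ : U + W = 1 - 'X) UW K.
apply: (@det_hankel_shift _ _ (fun t => (U ^+ K)`_t)).
- by [].
- exact: aK0.
- move=> s' s'_lt; rewrite -[RHS](coef1 _ s') -(expr1n _ K) -(eqtruncX K FU); last lia.
  rewrite exprMn mulrC coefM; apply: eq_bigr => t _.
  have ts : (t <= s')%N by rewrite -ltnS.
  by rewrite mulrC subzn // (@aK_motzkin_poly K _ N) //; lia.
- move=> r r_lt; have j_lt : (L.+2 + r < N)%N by lia.
  have := UW_sum _ j_lt; rewrite coefD (nth_default 0 (leq_trans s_size _)); last lia.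
  move/eqP; rewrite addr_eq0 => /eqP ->; congr (- _).
  rewrite /W exprMn -exprM coefXnM; case: ltnP => j_2K.
    by case e : (r%:Z + (m%:Z + 1 - K%:Z)) => //; lia.
  rewrite (_ : _ + _ = (L.+2 + r - 2 * K)%N%:Z); last lia.
  by rewrite (@aK_motzkin_poly K _ N) //; lia.
Qed.

Theorem corollary3p2 (k m : nat) (hk : (0 < k)%N) :
  ((forall N : nat, (1 <= N <= m + 2 * k - 1)%N ->
      hankelD (2 * k) (1 - (2 * k)%:Z - m%:Z) N = 0) /\
   (forall n : nat,
      hankelD (2 * k) (1 - (2 * k)%:Z - m%:Z) (n + m + 2 * k) =
      (-1) ^+ 'C(m + 2 * k, 2) * hankelD (2 * k) (1 - (2 * k)%:Z + m%:Z) n)) /\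
  ((forall N : nat, (1 <= N <= m + 2 * k - 2)%N ->
      hankelD (2 * k - 1) (2 - (2 * k)%:Z - m%:Z) N = 0) /\
   (forall n : nat,
      hankelD (2 * k - 1) (2 - (2 * k)%:Z - m%:Z) (n + m + 2 * k - 1) =
      (-1) ^+ 'C(m + 2 * k - 1, 2) * hankelD (2 * k - 1) (2 - (2 * k)%:Z + m%:Z) n)).
Proof.
have evenL : 1 - (2 * k)%:Z - m%:Z = - (m + 2 * k - 1)%N%:Z by lia.
have oddL : 2 - (2 * k)%:Z - m%:Z = - (m + 2 * k - 2)%N%:Z by lia.
split; split.
- by move=> N hN; rewrite evenL hankelD_neg_shift_eq0 //; lia.
- move=> n; rewrite evenL (_ : (n + m + 2 * k = n + (m + 2 * k - 1).+1)%N); last lia.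
  by rewrite (hankelD_shift (m := m)); [congr ((-1) ^+ 'C(_, 2) * hankelD _ _ _) | |]; lia.
- by move=> N hN; rewrite oddL hankelD_neg_shift_eq0 //; lia.
- move=> n; rewrite oddL (_ : (n + m + 2 * k - 1 = n + (m + 2 * k - 2).+1)%N); last lia.
  by rewrite (hankelD_shift (m := m)); [congr ((-1) ^+ 'C(_, 2) * hankelD _ _ _) | |]; lia.
Qed.
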